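(* Let $b\ge 2$ be an integer and $d\in\{0,1,\dots,b-1\}$. For $i\ge1$ put $\gamma_i=\sum_{0\le a<b,\ a\ne d}a^i$. Define $u_{0;0}=b$ and, for $m\ge1$, define $u_{0;m}$ recursively by $$(b^{m+1}-b+1)\,u_{0;m}=\sum_{i=1}^{m}\binom{m}{i}\gamma_i\,u_{0;m-i}.$$ For $j\ge1$ and $m\ge0$ define $u_{j;m}$ recursively by $$(b^{m+1}-b+1)\,u_{j;m}=\sum_{i=1}^{m}\binom{m}{i}\gamma_i\,u_{j;m-i}+\sum_{i=0}^{m}\binom{m}{i}d^i\,u_{j-1;m-i}$$ (with the convention $0^0=1$). In particular $u_{j;0}=b$ for all $j\ge0$. Then for every $k\ge0$ and every $l\ge1$, $$H^{(k)}=\sum_{\substack{0<n<b^{l-1}\\ k(n)=k}}\frac1n\;+\;b\sum_{\substack{b^{l-1}\le n<b^{l}\\ k(n)\le k}}\frac1n\;+\;\sum_{m=1}^{\infty}(-1)^m\sum_{\substack{b^{l-1}\le n<b^{l}\\ k(n)\le k}}\frac{u_{k-k(n);m}}{n^{m+1}}.$$ Moreover, the numbers $u_{j;m}$ ($j\ge0$, $m\ge1$) satisfy: (i) $u_{j;m}\ge0$, with $u_{j;m}=0$ only if $j=0$, $b=2$ and $d=1$; (ii) for all $j\ge 0$, $m\ge0$: $u_{j;m+1}\le u_{j;m}$, with strict inequality unless both are $0$; (iii) for each fixed $m\ge1$, the sequence $(u_{j;m})_{j\ge0}$ is strictly increasing and converges to $b/(m+1)$.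
   Context: For an integer $n\ge0$, its (minimal) base-$b$ representation is the string of base-$b$ digits of $n$ without leading zeros (the empty string for $n=0$); $k(n)$ denotes the number of occurrences of the digit $d$ in this representation. For $k\ge0$, the Irwin sum is $H^{(k)}=\sum_{n\ge1,\ k(n)=k}1/n$ (a convergent series of positive terms; it equals $0$ when $b=2$, $d=1$, $k=0$, the series being empty). *)

From Stdlib Require Import Reals Lra Lia Arith List.
From Coquelicot Require Import Coquelicot.
Import ListNotations.
Open Scope R_scope.

(** Number of occurrences of the digit [d] in the minimal base-[b]
    representation of [n] (no leading zeros; empty string for n = 0).
    The fuel [n] is sufficient when [b >= 2]. *)
Fixpoint dcount_aux (fuel b d n : nat) : nat :=
  match fuel with
  | O => O
  | S f => if Nat.eqb n 0 then O
           else ((if Nat.eqb (n mod b) d then 1 else 0) + dcount_aux f b d (n / b))%nat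
  end.

Definition dcount (b d n : nat) : nat := dcount_aux n b d n.

Definition irwin_term (b d k n : nat) : R :=
  if andb (Nat.leb 1 n) (Nat.eqb (dcount b d n) k) then / INR n else 0.

Definition irwin_sum (b d k : nat) : R := Series (irwin_term b d k).

Definition fsum (lo hi : nat) (f : nat -> R) : R :=
  fold_right Rplus 0 (map f (seq lo (hi - lo))).

Definition gamma (b d i : nat) : R :=
  fold_right Rplus 0 (map (fun a => if Nat.eqb a d then 0 else INR a ^ i) (seq 0 b)).

(** [ulist b d prev base m] = [u_m; u_(m-1); ...; u_0] for one row of the
    recursion.  If [base] is true this is the row j = 0 (u_{0;0} = b and no
    contribution from a previous row); otherwise [prev] is the row j-1 and
    (b^(m+1)-b+1) u_m = sum_{i=1}^m C(m,i) gamma_i u_(m-i)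
                         + sum_{i=0}^m C(m,i) d^i prev(m-i)
    (with 0^0 = 1, as for Stdlib's [pow]). *)
Fixpoint ulist (b d : nat) (prev : nat -> R) (base : bool) (m : nat) : list R :=
  match m with
  | O => [ if base then INR b else prev O / (INR b ^ 1 - INR b + 1) ]
  | S m' =>
      let L := ulist b d prev base m' in
      let s1 := sum_f_R0 (fun k => Binomial.C m (S k) * gamma b d (S k) * nth k L 0) m' in
      let s2 := if base then 0
                else sum_f_R0 (fun i => Binomial.C m i * INR d ^ i * prev (m - i)%nat) m in
      ((s1 + s2) / (INR b ^ (S m) - INR b + 1)) :: L
  end.

Fixpoint u (b d j : nat) : nat -> R :=
  match j with
  | O => fun m => nth 0 (ulist b d (fun _ => 0) true m) 0
  | S j' => fun m => nth 0 (ulist b d (u b d j') false m) 0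
  end.

(* Write n = n0 * b^r + t with b^(l-1) <= n0 < b^l and t < b^r: then k(n) = k(n0) + c_r(t),
   where c_r(t) counts the digit d among the r low digits of t.  Summing 1/n over such n
   gives the integral of 1/(n0 + x) against the measure mu_j (j = k - k(n0)) carrying mass
   b^-r at each grid point t / b^r with c_r(t) = j.  Splitting off the leading digit shows
   that the moments of mu_j obey the recurrence defining u_{j;m}, so u_{j;m} = int x^m dmu_j,
   and expanding 1/(n0 + x) geometrically yields the formula.  The same recurrence, compared
   with its solution b/(m+1) (the moments of b times Lebesgue measure on [0,1]), gives the
   positivity, the monotonicity in j and the limit; monotonicity in m comes from x^(m+1) <= x^m
   on [0,1], strictly away from the point 1 which no mu_j charges. *)

From Stdlib Require Import Reals Lra Lia Arith List.
From Coquelicot Require Import Coquelicot.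
Open Scope R_scope.

Fixpoint sumR (n : nat) (f : nat -> R) : R :=
  match n with O => 0 | S n' => sumR n' f + f n' end.

Lemma sumR_ext n f g : (forall i, (i < n)%nat -> f i = g i) -> sumR n f = sumR n g.
Proof.
  induction n as [|n IH]; intros H; simpl; [reflexivity|].
  rewrite IH, H by first [lia | intros; apply H; lia]; reflexivity.
Qed.

Lemma sumR_plus n f g : sumR n (fun i => f i + g i) = sumR n f + sumR n g.
Proof. induction n as [|n IH]; simpl; [lra|]. rewrite IH; lra. Qed.

Lemma sumR_minus n f g : sumR n (fun i => f i - g i) = sumR n f - sumR n g.
Proof. induction n as [|n IH]; simpl; [lra|]. rewrite IH; lra. Qed.

Lemma sumR_scal_l n c f : sumR n (fun i => c * f i) = c * sumR n f.
Proof. induction n as [|n IH]; simpl; [lra|]. rewrite IH; lra. Qed.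

Lemma sumR_eq0 n f : (forall i, (i < n)%nat -> f i = 0) -> sumR n f = 0.
Proof.
  induction n as [|n IH]; intros H; simpl; [reflexivity|].
  rewrite IH, H by first [lia | intros; apply H; lia]; lra.
Qed.

Lemma sumR_le n f g : (forall i, (i < n)%nat -> f i <= g i) -> sumR n f <= sumR n g.
Proof.
  induction n as [|n IH]; intros H; simpl; [lra|].
  apply Rplus_le_compat; [apply IH; intros; apply H|apply H]; lia.
Qed.

Lemma sumR_nonneg n f : (forall i, (i < n)%nat -> 0 <= f i) -> 0 <= sumR n f.
Proof.
  intros H. rewrite <- (sumR_eq0 n (fun _ => 0)) by reflexivity. now apply sumR_le.
Qed.

Lemma sumR_term_le n f k :
  (forall i, (i < n)%nat -> 0 <= f i) -> (k < n)%nat -> f k <= sumR n f.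
Proof.
  induction n as [|n IH]; intros H Hk; simpl; [lia|].
  assert (0 <= sumR n f) by (apply sumR_nonneg; intros; apply H; lia).
  destruct (Nat.eq_dec k n) as [->|Hne]; [lra|].
  assert (f k <= sumR n f) by (apply IH; [intros; apply H|]; lia).
  specialize (H n ltac:(lia)); lra.
Qed.

Lemma sumR_add_range n p f : sumR (n + p) f = sumR n f + sumR p (fun i => f (n + i)%nat).
Proof.
  induction p as [|p IH]; simpl; [rewrite Nat.add_0_r; lra|].
  rewrite Nat.add_succ_r; simpl; rewrite IH; lra.
Qed.

Lemma sumR_succ_l n f : sumR (S n) f = f O + sumR n (fun i => f (S i)).
Proof. rewrite <- Nat.add_1_l, sumR_add_range; simpl; lra. Qed.

Lemma sumR_le_range n p f : (n <= p)%nat -> (forall i, 0 <= f i) -> sumR n f <= sumR p f.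
Proof.
  intros Hnp Hf. replace p with (n + (p - n))%nat by lia. rewrite sumR_add_range.
  assert (0 <= sumR (p - n) (fun i => f (n + i)%nat)) by (apply sumR_nonneg; auto). lra.
Qed.

Lemma sumR_swap n p (f : nat -> nat -> R) :
  sumR n (fun i => sumR p (fun j => f i j)) = sumR p (fun j => sumR n (fun i => f i j)).
Proof.
  induction n as [|n IH]; simpl; [symmetry; now apply sumR_eq0|].
  rewrite IH, <- sumR_plus; reflexivity.
Qed.

Lemma sumR_mul_range n c f :
  sumR (n * c) f = sumR n (fun i => sumR c (fun t => f (i * c + t)%nat)).
Proof.
  induction n as [|n IH]; simpl; [reflexivity|].
  rewrite Nat.add_comm, sumR_add_range, IH; reflexivity.
Qed.

Lemma sumR_const n c : sumR n (fun _ => c) = INR n * c.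
Proof. induction n as [|n IH]; simpl sumR; [simpl; lra|]. rewrite IH, S_INR; lra. Qed.

Lemma sumR_telescope n (f : nat -> R) : sumR n (fun i => f (S i) - f i) = f n - f O.
Proof. induction n as [|n IH]; simpl; [lra|]. rewrite IH; lra. Qed.

Lemma sumR_eqb_split n d X Y : (d < n)%nat ->
  sumR n (fun a => if Nat.eqb a d then X a else Y a)
  = sumR n (fun a => if Nat.eqb a d then 0 else Y a) + X d.
Proof.
  induction n as [|n IH]; intros Hd; [lia|]. simpl.
  destruct (Nat.eq_dec d n) as [->|Hne].
  - rewrite Nat.eqb_refl.
    rewrite (sumR_ext n _ Y), (sumR_ext n (fun a => if Nat.eqb a n then 0 else Y a) Y); [lra| |];
      intros i Hi; destruct (Nat.eqb_spec i n); lia || reflexivity.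
  - rewrite IH by lia. destruct (Nat.eqb_spec n d); [lia|lra].
Qed.

Lemma fsum_sumR lo hi f : fsum lo hi f = sumR (hi - lo) (fun i => f (lo + i)%nat).
Proof.
  unfold fsum. induction (hi - lo)%nat as [|n IH]; [reflexivity|].
  rewrite seq_S, map_app, fold_right_app; simpl.
  rewrite <- IH. clear IH. induction (map f (seq lo n)) as [|x l IHl]; simpl; lra.
Qed.

Lemma sum_f_R0_sumR f n : sum_f_R0 f n = sumR (S n) f.
Proof. induction n as [|n IH]; simpl; [lra|]. now rewrite IH. Qed.

Lemma sum_n_sumR f n : sum_n f n = sumR (S n) f.
Proof. rewrite sum_n_Reals; apply sum_f_R0_sumR. Qed.

Lemma is_lim_seq_sumR n (f : nat -> nat -> R) (l : nat -> R) :
  (forall i, (i < n)%nat -> is_lim_seq (fun N => f N i) (l i)) ->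
  is_lim_seq (fun N => sumR n (f N)) (sumR n l).
Proof.
  induction n as [|n IH]; intros H; simpl; [apply is_lim_seq_const|].
  apply is_lim_seq_plus'; [apply IH; intros|apply H]; auto; lia.
Qed.

Lemma is_lim_seq_finite_unique (f : nat -> R) (l l' : R) :
  is_lim_seq f l -> is_lim_seq f l' -> l = l'.
Proof.
  intros H H'. apply is_lim_seq_unique in H, H'. rewrite H in H'. now injection H'.
Qed.

Lemma inv_geometric (N x : R) M : 1 <= N -> 0 <= x ->
  / (N + x) = sumR (S M) (fun m => (-1) ^ m * x ^ m / N ^ S m)
              + (- x) ^ S M / (N ^ S M * (N + x)).
Proof.
  intros HN Hx. induction M as [|M IH]; [simpl; field; lra|].
  rewrite IH. change (sumR (S (S M)) ?f) with (sumR (S M) f + f (S M)). cbv beta.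
  assert (0 < N ^ S M) by (apply pow_lt; lra).
  replace ((-1) ^ S M * x ^ S M) with ((- x) ^ S M)
    by (rewrite <- Rpow_mult_distr; f_equal; ring).
  replace ((- x) ^ S (S M)) with (- x * (- x) ^ S M) by (simpl; ring).
  replace (N ^ S (S M)) with (N * N ^ S M) by (simpl; ring).
  field. split; lra.
Qed.

Lemma geometric_remainder_bound (N x : R) M : 1 <= N -> 0 <= x ->
  Rabs ((- x) ^ S M / (N ^ S M * (N + x))) <= x ^ S M.
Proof.
  intros HN Hx. assert (1 <= N ^ S M) by (apply pow_R1_Rle; lra).
  assert (0 <= x ^ S M) by (apply pow_le; lra).
  assert (1 <= N ^ S M * (N + x)) by nra.
  rewrite Rabs_div by lra. rewrite <- RPow_abs, Rabs_Ropp, (Rabs_right x) by lra.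
  rewrite (Rabs_right (N ^ S M * (N + x))) by lra.
  apply (Rmult_le_reg_r (N ^ S M * (N + x))); [lra|]. field_simplify; [nra|lra].
Qed.

Section Digits.
Variables b d : nat.
Hypothesis hb : (2 <= b)%nat.

Lemma dcount_aux_fuel f1 f2 n : (n <= f1)%nat -> (n <= f2)%nat ->
  dcount_aux f1 b d n = dcount_aux f2 b d n.
Proof.
  revert f2 n; induction f1 as [|f1 IH]; intros [|f2] n H1 H2; simpl;
    try (replace n with 0%nat by lia; reflexivity).
  destruct (Nat.eqb_spec n 0); [reflexivity|].
  assert (n / b < n)%nat by (apply Nat.div_lt; lia).
  f_equal; apply IH; lia.
Qed.

Lemma dcount_unfold n : (0 < n)%nat ->
  dcount b d n = ((if Nat.eqb (n mod b) d then 1 else 0) + dcount b d (n / b))%nat.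
Proof.
  intros Hn. unfold dcount. destruct n as [|n]; [lia|]. simpl. f_equal.
  assert (S n / b < S n)%nat by (apply Nat.div_lt; lia).
  apply dcount_aux_fuel; lia.
Qed.

(* Occurrences of [d] among the [r] lowest base-[b] digits of [t], leading zeros included. *)
Fixpoint lowcount (r t : nat) : nat :=
  match r with
  | O => O
  | S r' => ((if Nat.eqb (t mod b) d then 1 else 0) + lowcount r' (t / b))%nat
  end.

Lemma shift_digit_mod_div n r t :
  ((n * b ^ S r + t) mod b = t mod b /\ (n * b ^ S r + t) / b = n * b ^ r + t / b)%nat.
Proof.
  rewrite Nat.pow_succ_r'.
  replace (n * (b * b ^ r) + t)%nat with (t + (n * b ^ r) * b)%nat by lia.
  rewrite Nat.Div0.mod_add, Nat.div_add by lia. split; lia.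
Qed.

Lemma dcount_shift r : forall n t, (1 <= n)%nat -> (t < b ^ r)%nat ->
  dcount b d (n * b ^ r + t) = (dcount b d n + lowcount r t)%nat.
Proof.
  induction r as [|r IH]; intros n t Hn Ht.
  - simpl in *. replace t with 0%nat by lia. rewrite Nat.mul_1_r, Nat.add_0_r. lia.
  - assert (0 < b ^ S r)%nat by (apply Nat.neq_0_lt_0, Nat.pow_nonzero; lia).
    rewrite dcount_unfold by nia. simpl lowcount.
    destruct (shift_digit_mod_div n r t) as [-> ->].
    rewrite IH; [lia|lia|].
    rewrite Nat.pow_succ_r' in Ht. apply Nat.Div0.div_lt_upper_bound; lia.
Qed.

Lemma lowcount_top r a t : (a < b)%nat -> (t < b ^ r)%nat ->
  lowcount (S r) (a * b ^ r + t) = ((if Nat.eqb a d then 1 else 0) + lowcount r t)%nat.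
Proof.
  revert a t; induction r as [|r IH]; intros a t Ha Ht.
  - simpl in *. replace t with 0%nat by lia.
    rewrite Nat.mul_1_r, Nat.add_0_r, Nat.mod_small, !Nat.add_0_r by lia. reflexivity.
  - change (lowcount (S (S r)) (a * b ^ S r + t)) with
      ((if Nat.eqb ((a * b ^ S r + t) mod b) d then 1 else 0)
       + lowcount (S r) ((a * b ^ S r + t) / b))%nat.
    destruct (shift_digit_mod_div a r t) as [-> ->].
    rewrite IH; [simpl; lia|lia|].
    rewrite Nat.pow_succ_r' in Ht. apply Nat.Div0.div_lt_upper_bound; lia.
Qed.

End Digits.

(** * The recurrence for [u] *)

Lemma ulist_nth b d prev base m k : (k <= m)%nat ->
  nth k (ulist b d prev base m) 0 = nth 0 (ulist b d prev base (m - k)) 0.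
Proof.
  revert k; induction m as [|m IH]; intros [|k] Hk; try reflexivity.
  - lia.
  - simpl (ulist b d prev base (S m)); simpl nth. apply IH; lia.
Qed.

Lemma binom_nonneg n k : 0 <= Binomial.C n k.
Proof.
  unfold Binomial.C. apply Rmult_le_pos; [apply pos_INR|].
  apply Rlt_le, Rinv_0_lt_compat, Rmult_lt_0_compat; apply INR_fact_lt_0.
Qed.

Section Irwin.
Variables b d : nat.
Hypothesis hb : (2 <= b)%nat.
Hypothesis hd : (d < b)%nat.
Let B := INR b.

Lemma B_ge2 : 2 <= B.
Proof. apply (le_INR 2); lia. Qed.

Lemma pow_B_pos r : 0 < B ^ r.
Proof. apply pow_lt. pose proof B_ge2; lra. Qed.

Lemma gamma_sumR i :
  gamma b d i = sumR b (fun a => if Nat.eqb a d then 0 else INR a ^ i).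
Proof.
  unfold gamma. rewrite <- (Nat.sub_0_r b) at 1. fold (fsum 0 b (fun a => if Nat.eqb a d then 0 else INR a ^ i)).
  rewrite fsum_sumR, Nat.sub_0_r. reflexivity.
Qed.

Lemma gamma_0 : gamma b d 0 = B - 1.
Proof.
  rewrite gamma_sumR.
  pose proof (sumR_eqb_split b d (fun _ => 1) (fun _ => 1) hd) as H. simpl pow.
  rewrite (sumR_ext _ (fun a => if Nat.eqb a d then 1 else 1) (fun _ => 1)), sumR_const in H
    by (intros; now destruct (Nat.eqb i d)).
  unfold B; lra.
Qed.

Lemma gamma_nonneg i : 0 <= gamma b d i.
Proof.
  rewrite gamma_sumR. apply sumR_nonneg. intros a _.
  destruct (Nat.eqb a d); [lra|apply pow_le, pos_INR].
Qed.

Lemma gamma_pos i : ~ (b = 2%nat /\ d = 1%nat) -> 0 < gamma b d i.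
Proof.
  intros Hbd. set (a := if Nat.eqb d 1 then 2%nat else 1%nat).
  assert (Ha : (a < b)%nat /\ a <> d /\ a <> 0%nat) by (unfold a; destruct (Nat.eqb_spec d 1); lia).
  rewrite gamma_sumR. eapply Rlt_le_trans; [|apply sumR_term_le with (k := a)].
  - destruct (Nat.eqb_spec a d); [lia|]. apply pow_lt, (lt_INR 0); lia.
  - intros t _. destruct (Nat.eqb t d); [lra|apply pow_le, pos_INR].
  - lia.
Qed.

Definition denom m := B ^ S m - B + 1.

Lemma denom_pos m : 0 < denom m.
Proof.
  unfold denom. assert (B <= B ^ S m); [|lra].
  simpl. pose proof B_ge2. rewrite <- (Rmult_1_r B) at 1.
  apply Rmult_le_compat_l; [lra|]. apply pow_R1_Rle; lra.
Qed.

Definition lower_sum (X : nat -> R) m :=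
  sumR m (fun k => Binomial.C m (S k) * gamma b d (S k) * X (m - S k)%nat).

Definition solves_rec (X P : nat -> R) := forall m, denom m * X m = lower_sum X m + P m.

Lemma lower_sum_nonneg X m : (forall k, (k < m)%nat -> 0 <= X k) -> 0 <= lower_sum X m.
Proof.
  intros HX. apply sumR_nonneg. intros k Hk.
  apply Rmult_le_pos; [apply Rmult_le_pos; [apply binom_nonneg|apply gamma_nonneg]|apply HX; lia].
Qed.

Lemma lower_sum_ge_last X m : (forall k, 0 <= X k) -> gamma b d (S m) * X O <= lower_sum X (S m).
Proof.
  intros HX. eapply Rle_trans; [|apply sumR_term_le with (k := m)].
  - rewrite C_n_n, Nat.sub_diag; lra.
  - intros; apply Rmult_le_pos; [apply Rmult_le_pos; [apply binom_nonneg|apply gamma_nonneg]|apply HX].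
  - lia.
Qed.

Lemma solves_rec_nonneg X P : solves_rec X P -> (forall m, 0 <= P m) -> forall m, 0 <= X m.
Proof.
  intros HX HP m. induction m as [m IH] using Wf_nat.lt_wf_ind.
  pose proof (HX m). pose proof (denom_pos m). pose proof (HP m).
  pose proof (lower_sum_nonneg X m IH). nra.
Qed.

Lemma solves_rec_pos X P m : solves_rec X P -> (forall m, 0 <= P m) ->
  0 < P m \/ 0 < lower_sum X m -> 0 < X m.
Proof.
  intros HX HP Hm. pose proof (HX m). pose proof (denom_pos m).
  pose proof (lower_sum_nonneg X m (fun k _ => solves_rec_nonneg X P HX HP k)).
  pose proof (HP m). apply (Rmult_lt_reg_l (denom m)); lra.
Qed.

Lemma solves_rec_minus X Y P Q : solves_rec X P -> solves_rec Y Q ->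
  solves_rec (fun m => X m - Y m) (fun m => P m - Q m).
Proof.
  intros HX HY m. rewrite Rmult_minus_distr_l, HX, HY. unfold lower_sum. cbv beta.
  rewrite (sumR_ext m (fun k => Binomial.C m (S k) * gamma b d (S k) * (X (m - S k)%nat - Y (m - S k)%nat))
             (fun k => Binomial.C m (S k) * gamma b d (S k) * X (m - S k)%nat
                       - Binomial.C m (S k) * gamma b d (S k) * Y (m - S k)%nat))
    by (intros; ring).
  rewrite sumR_minus; ring.
Qed.

Lemma solves_rec_unique X Y P Q : solves_rec X P -> solves_rec Y Q ->
  (forall m, P m = Q m) -> forall m, X m = Y m.
Proof.
  intros HX HY HPQ m.
  assert (H1 := solves_rec_nonneg _ _ (solves_rec_minus _ _ _ _ HX HY)).
  assert (H2 := solves_rec_nonneg _ _ (solves_rec_minus _ _ _ _ HY HX)).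
  specialize (H1 ltac:(intros k; cbv beta; rewrite HPQ; lra) m).
  specialize (H2 ltac:(intros k; cbv beta; rewrite HPQ; lra) m). lra.
Qed.

Definition prev_row (X : nat -> nat -> R) j : nat -> R :=
  match j with O => fun _ => 0 | S j' => X j' end.

Definition dsum (Y : nat -> R) m := sumR (S m) (fun i => Binomial.C m i * INR d ^ i * Y (m - i)%nat).

(* [b^(m+1) * 0^m] times the unit atom at [0] that [mu_0] carries at level [0]. *)
Definition delta j m := match j, m with O, O => B | _, _ => 0 end.

Definition row_source (X : nat -> nat -> R) j m := delta j m + dsum (prev_row X j) m.

Lemma dsum_ext Y Z m : (forall k, Y k = Z k) -> dsum Y m = dsum Z m.
Proof. intros H. apply sumR_ext. intros; now rewrite H. Qed.

Lemma dsum_minus Y Z m : dsum Y m - dsum Z m = dsum (fun k => Y k - Z k) m.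
Proof. unfold dsum. rewrite <- sumR_minus. apply sumR_ext; intros; ring. Qed.

Lemma dsum_zero m : dsum (fun _ => 0) m = 0.
Proof. apply sumR_eq0; intros; ring. Qed.

Lemma dsum_nonneg Y m : (forall k, 0 <= Y k) -> 0 <= dsum Y m.
Proof.
  intros HY. apply sumR_nonneg; intros.
  apply Rmult_le_pos; [apply Rmult_le_pos; [apply binom_nonneg|apply pow_le, pos_INR]|apply HY].
Qed.

Lemma dsum_ge_head Y m : (forall k, 0 <= Y k) -> Y m <= dsum Y m.
Proof.
  intros HY. eapply Rle_trans; [|apply sumR_term_le with (k := 0%nat)].
  - rewrite C_n_0, Nat.sub_0_r; simpl; lra.
  - intros; apply Rmult_le_pos; [apply Rmult_le_pos; [apply binom_nonneg|apply pow_le, pos_INR]|apply HY].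
  - lia.
Qed.

Lemma dsum_ge_last Y m : (forall k, 0 <= Y k) -> INR d ^ m * Y O <= dsum Y m.
Proof.
  intros HY. eapply Rle_trans; [|apply sumR_term_le with (k := m)].
  - rewrite C_n_n, Nat.sub_diag; lra.
  - intros; apply Rmult_le_pos; [apply Rmult_le_pos; [apply binom_nonneg|apply pow_le, pos_INR]|apply HY].
  - lia.
Qed.

Lemma u_0 j : u b d j 0 = B.
Proof.
  induction j as [|j IH]; simpl; [reflexivity|].
  rewrite IH. unfold B. simpl. rewrite Rmult_1_r.
  replace (INR b - INR b + 1) with 1 by ring. field.
Qed.

Lemma u_row j m : u b d j m = nth 0 (ulist b d (prev_row (u b d) j) (Nat.eqb j 0) m) 0.
Proof. now destruct j. Qed.

Lemma u_rec j : solves_rec (u b d j) (row_source (u b d) j).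
Proof.
  intros [|m]; unfold row_source, lower_sum, dsum.
  - rewrite u_0. destruct j as [|j]; simpl; [|rewrite u_0]; unfold denom, Binomial.C; simpl; field.
  - rewrite u_row. cbn [ulist nth]. rewrite <- !sum_f_R0_sumR.
    pose proof (denom_pos (S m)) as Hden. unfold denom, B in Hden |- *.
    replace (delta j (S m)) with 0 by now destruct j.
    field_simplify_eq; [|lra]. f_equal.
    + apply sum_eq. intros k Hk. rewrite ulist_nth, <- u_row by lia. reflexivity.
    + destruct j as [|j]; [|reflexivity]. cbn [Nat.eqb prev_row].
      rewrite sum_f_R0_sumR, sumR_eq0; [reflexivity|intros; ring].
Qed.

(* Sum over the leading digit [a] of the moments of [x -> a + x], the row dropping by one
   for [a = d]; [digit_fixpoint] is the recurrence before isolating the term [i = 0]. *)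
Definition digit_sum (X : nat -> nat -> R) j m :=
  sumR b (fun a => sumR (S m) (fun i => Binomial.C m i * INR a ^ i *
    (if Nat.eqb a d then prev_row X j (m - i)%nat else X j (m - i)%nat))).

Definition digit_fixpoint (X : nat -> nat -> R) :=
  forall j m, B ^ S m * X j m = delta j m + digit_sum X j m.

Lemma digit_sum_gamma X j m : digit_sum X j m =
  sumR (S m) (fun i => Binomial.C m i * gamma b d i * X j (m - i)%nat) + dsum (prev_row X j) m.
Proof.
  unfold digit_sum.
  rewrite (sumR_ext b _ (fun a => if Nat.eqb a d
      then sumR (S m) (fun i => Binomial.C m i * INR a ^ i * prev_row X j (m - i)%nat)
      else sumR (S m) (fun i => Binomial.C m i * INR a ^ i * X j (m - i)%nat)))
    by (intros a _; now destruct (Nat.eqb a d)).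
  rewrite sumR_eqb_split by exact hd. f_equal.
  rewrite (sumR_ext b _ (fun a => sumR (S m) (fun i =>
      Binomial.C m i * X j (m - i)%nat * (if Nat.eqb a d then 0 else INR a ^ i)))).
  - rewrite sumR_swap. apply sumR_ext. intros i _. rewrite sumR_scal_l, gamma_sumR. ring.
  - intros a _. destruct (Nat.eqb a d);
      [symmetry; apply sumR_eq0 | apply sumR_ext]; intros; ring.
Qed.

Lemma digit_fixpoint_iff X j m :
  B ^ S m * X j m = delta j m + digit_sum X j m <->
  denom m * X j m = lower_sum (X j) m + row_source X j m.
Proof.
  rewrite digit_sum_gamma, sumR_succ_l, C_n_0, gamma_0, Nat.sub_0_r.
  unfold denom, row_source, lower_sum. split; intros; lra.
Qed.

Lemma u_digit_fixpoint : digit_fixpoint (u b d).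
Proof. intros j m. apply digit_fixpoint_iff, u_rec. Qed.

Lemma digit_fixpoint_unique X : digit_fixpoint X -> forall j m, X j m = u b d j m.
Proof.
  intros HX j.
  assert (Hrow : forall j, solves_rec (X j) (row_source X j))
    by (intros j' m; apply digit_fixpoint_iff, HX).
  induction j as [|j IH].
  - now apply (solves_rec_unique _ _ _ _ (Hrow 0%nat) (u_rec 0)).
  - apply (solves_rec_unique _ _ _ _ (Hrow (S j)) (u_rec (S j))).
    intros m. unfold row_source. f_equal. now apply dsum_ext.
Qed.

(* The moments of [b] times Lebesgue measure on [0, 1]: a fixed point of the row map. *)
Definition u_limit m := B / INR (S m).

Lemma u_limit_pos m : 0 < u_limit m.
Proof. unfold u_limit. pose proof B_ge2. apply Rdiv_lt_0_compat; [lra|apply (lt_INR 0); lia]. Qed.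

Lemma binomial_sum_u_limit a m :
  sumR (S m) (fun i => Binomial.C m i * INR a ^ i * u_limit (m - i)) =
  B / INR (S m) * ((INR a + 1) ^ S m - INR a ^ S m).
Proof.
  unfold u_limit.
  rewrite (sumR_ext _ _ (fun i => B / INR (S m) * (Binomial.C (S m) i * INR a ^ i))).
  - rewrite sumR_scal_l. f_equal.
    rewrite binomial, sum_f_R0_sumR.
    change (sumR (S (S m)) ?f) with (sumR (S m) f + f (S m)); cbv beta.
    rewrite C_n_n, Nat.sub_diag.
    rewrite (sumR_ext (S m) (fun i => Binomial.C (S m) i * INR a ^ i * 1 ^ (S m - i))
               (fun i => Binomial.C (S m) i * INR a ^ i))
      by (intros; rewrite pow1; ring).
    simpl pow; ring.
  - intros i Hi. rewrite pascal_step2 by lia.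
    replace (S m - i)%nat with (S (m - i)) by lia.
    field. split; apply not_0_INR; lia.
Qed.

Lemma u_limit_digit_sum m :
  sumR b (fun a => sumR (S m) (fun i => Binomial.C m i * INR a ^ i * u_limit (m - i)))
  = B ^ S m * u_limit m.
Proof.
  rewrite (sumR_ext b _ (fun a => B / INR (S m) * (INR (S a) ^ S m - INR a ^ S m)))
    by (intros a _; rewrite binomial_sum_u_limit, (S_INR a); reflexivity).
  rewrite sumR_scal_l, (sumR_telescope b (fun a => INR a ^ S m)).
  unfold u_limit, B. simpl INR at 3. rewrite pow_ne_zero by lia. ring.
Qed.

Lemma u_limit_rec : solves_rec u_limit (dsum u_limit).
Proof.
  intros m. pose proof (proj1 (digit_fixpoint_iff (fun _ => u_limit) 1 m)) as H.
  unfold row_source in H. cbn [delta prev_row] in H. rewrite !Rplus_0_l in H.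
  apply H. unfold digit_sum. cbn [prev_row].
  rewrite <- u_limit_digit_sum. apply sumR_ext. intros a _.
  apply sumR_ext. intros i _. now destruct (Nat.eqb a d).
Qed.

Lemma solves_rec_source_pos X P : solves_rec X P ->
  (forall m, 0 <= P m) -> (forall m, (1 <= m)%nat -> 0 < P m) ->
  (forall m, 0 <= X m) /\ (forall m, (1 <= m)%nat -> 0 < X m).
Proof.
  intros HX HP HP1. split; [exact (solves_rec_nonneg X P HX HP)|].
  intros m Hm. apply (solves_rec_pos X P m HX HP). left; auto.
Qed.

Lemma delta_nonneg j m : 0 <= delta j m.
Proof. destruct j, m; simpl; pose proof B_ge2; lra. Qed.

Lemma u_row_source_nonneg j m : (forall k, 0 <= prev_row (u b d) j k) -> 0 <= row_source (u b d) j m.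
Proof.
  intros H. unfold row_source.
  pose proof (delta_nonneg j m). pose proof (dsum_nonneg _ m H). lra.
Qed.

Lemma u_nonneg j m : 0 <= u b d j m.
Proof.
  revert m; induction j as [|j IH];
    apply (solves_rec_nonneg _ _ (u_rec _)); intros m; apply u_row_source_nonneg.
  - intros; simpl; lra.
  - exact IH.
Qed.

Lemma u_pos j m : (1 <= m)%nat -> j <> 0%nat \/ ~ (b = 2%nat /\ d = 1%nat) -> 0 < u b d j m.
Proof.
  intros Hm Hj. destruct m as [|m]; [lia|]. pose proof B_ge2.
  apply (solves_rec_pos _ _ _ (u_rec j)).
  { intros k; apply u_row_source_nonneg. destruct j; intros; simpl; [lra|apply u_nonneg]. }
  assert (Hcase : ~ (b = 2%nat /\ d = 1%nat) \/ (j <> 0%nat /\ d <> 0%nat)) by lia.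
  destruct Hcase as [Hbd|[Hj0 Hd0]].
  - right. eapply Rlt_le_trans; [|apply lower_sum_ge_last, u_nonneg].
    rewrite u_0. pose proof (gamma_pos (S m) Hbd). nra.
  - left. destruct j as [|j]; [lia|]. unfold row_source. cbn [delta prev_row]. rewrite Rplus_0_l.
    eapply Rlt_le_trans; [|apply dsum_ge_last, u_nonneg].
    rewrite u_0. apply Rmult_lt_0_compat; [apply pow_lt, (lt_INR 0); lia|lra].
Qed.

Lemma u_below_limit j :
  (forall m, 0 <= u_limit m - u b d j m) /\ (forall m, (1 <= m)%nat -> 0 < u_limit m - u b d j m).
Proof.
  induction j as [|j [IH0 IH1]];
    apply (solves_rec_source_pos _ _ (solves_rec_minus _ _ _ _ u_limit_rec (u_rec _)));
    intros m; unfold row_source; cbn [prev_row].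
  - pose proof (dsum_ge_head u_limit m (fun k => Rlt_le _ _ (u_limit_pos k))).
    rewrite dsum_zero. destruct m; unfold delta; [unfold u_limit in *; simpl in *; lra|].
    pose proof (u_limit_pos (S m)). lra.
  - intros Hm. pose proof (dsum_ge_head u_limit m (fun k => Rlt_le _ _ (u_limit_pos k))).
    rewrite dsum_zero. destruct m; [lia|]. unfold delta. pose proof (u_limit_pos (S m)). lra.
  - cbn [delta]. rewrite Rplus_0_l, dsum_minus. now apply dsum_nonneg.
  - intros Hm. cbn [delta]. rewrite Rplus_0_l, dsum_minus.
    eapply Rlt_le_trans; [apply IH1, Hm|]. exact (dsum_ge_head (fun k => u_limit k - u b d j k) m IH0).
Qed.

Lemma u_le_limit j m : u b d j m <= u_limit m.
Proof. pose proof (proj1 (u_below_limit j) m); lra. Qed.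

Lemma u_succ_index_gap j :
  (forall m, 0 <= u b d (S j) m - u b d j m) /\
  (forall m, (1 <= m)%nat -> 0 < u b d (S j) m - u b d j m).
Proof.
  induction j as [|j [IH0 IH1]];
    apply (solves_rec_source_pos _ _ (solves_rec_minus _ _ _ _ (u_rec _) (u_rec _)));
    intros m; unfold row_source; cbn [prev_row delta].
  - rewrite dsum_zero. pose proof (dsum_nonneg (u b d 0) m (u_nonneg 0)).
    destruct m; [|lra]. unfold dsum; simpl. rewrite C_n_0. unfold B; lra.
  - intros Hm. rewrite dsum_zero. destruct m as [|m]; [lia|]. cut (0 < dsum (u b d 0) (S m)); [intros; lra|].
    destruct (Nat.eq_dec d 0) as [Hd0|Hd0].
    + eapply Rlt_le_trans; [|apply dsum_ge_head, u_nonneg].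
      apply u_pos; [lia|right; lia].
    + eapply Rlt_le_trans; [|apply dsum_ge_last, u_nonneg].
      rewrite u_0. apply Rmult_lt_0_compat; [apply pow_lt, (lt_INR 0); lia|pose proof B_ge2; lra].
  - rewrite !Rplus_0_l, dsum_minus. now apply dsum_nonneg.
  - intros Hm. rewrite !Rplus_0_l, dsum_minus.
    eapply Rlt_le_trans; [apply IH1, Hm|].
    exact (dsum_ge_head (fun k => u b d (S j) k - u b d j k) m IH0).
Qed.

Lemma u_lt_succ_index j m : (1 <= m)%nat -> u b d j m < u b d (S j) m.
Proof. intros Hm. pose proof (proj2 (u_succ_index_gap j) m Hm); lra. Qed.

(* Passing to the limit in the recurrence gives [denom m * l = l], and [denom m > 1]. *)
Lemma rec_chain_limit (Y : nat -> nat -> R) m (l : R) : (1 <= m)%nat ->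
  (forall j, denom m * Y (S j) m = lower_sum (Y (S j)) m + dsum (Y j) m) ->
  (forall k, (k < m)%nat -> is_lim_seq (fun j => Y j k) 0) ->
  is_lim_seq (fun j => Y j m) l -> l = 0.
Proof.
  intros Hm Hrec Hlow Htop.
  set (L := fun k => if Nat.ltb k m then 0 else l).
  assert (HL : forall k, (k <= m)%nat -> is_lim_seq (fun j => Y j k) (L k)).
  { intros k Hk. unfold L. destruct (Nat.ltb_spec k m); [apply Hlow; lia|].
    now replace k with m by lia. }
  assert (Hlim : denom m * l = lower_sum L m + dsum L m).
  { apply (is_lim_seq_finite_unique (fun j => denom m * Y (S j) m)).
    - apply (is_lim_seq_scal_l _ _ l), (is_lim_seq_incr_1 (fun j => Y j m)), Htop.
    - eapply is_lim_seq_ext; [intros j; symmetry; apply Hrec|].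
      apply is_lim_seq_plus'; apply is_lim_seq_sumR; intros i Hi;
        apply (is_lim_seq_scal_l _ _ (L _)).
      + apply (is_lim_seq_incr_1 (fun j => Y j (m - S i)%nat)), HL; lia.
      + apply HL; lia. }
  assert (Hlow0 : lower_sum L m = 0).
  { apply sumR_eq0. intros i Hi. unfold L. destruct (Nat.ltb_spec (m - S i) m); [ring|lia]. }
  assert (Hd : dsum L m = l).
  { unfold dsum. rewrite sumR_succ_l, C_n_0, Nat.sub_0_r, sumR_eq0.
    - unfold L. rewrite Nat.ltb_irrefl. simpl; ring.
    - intros i Hi. unfold L. destruct (Nat.ltb_spec (m - S i) m); [ring|lia]. }
  rewrite Hlow0, Hd in Hlim. unfold denom in Hlim.
  assert (B < B ^ S m).
  { destruct m as [|m]; [lia|]. pose proof B_ge2. simpl.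
    assert (1 < B * B ^ m) by (pose proof (pow_R1_Rle B m); nra). nra. }
  assert ((B ^ S m - B) * l = 0) by lra.
  apply Rmult_integral in H0. destruct H0; lra.
Qed.

Lemma u_lim_index m : is_lim_seq (fun j => u b d j m) (u_limit m).
Proof.
  induction m as [m IH] using Wf_nat.lt_wf_ind.
  set (Y := fun j k => u_limit k - u b d j k).
  assert (HY : forall k, is_lim_seq (fun j => Y j k) 0 -> is_lim_seq (fun j => u b d j k) (u_limit k)).
  { intros k Hk. eapply is_lim_seq_ext with (fun j => u_limit k - Y j k); [intros; unfold Y; ring|].
    replace (Finite (u_limit k)) with (Finite (u_limit k - 0)) by (f_equal; ring).
    apply is_lim_seq_minus'; [apply is_lim_seq_const|exact Hk]. }
  apply HY. destruct m as [|m].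
  { eapply is_lim_seq_ext; [|apply is_lim_seq_const].
    intros j. unfold Y, u_limit. rewrite u_0. simpl; field. }
  assert (Hdec : forall j, Y (S j) (S m) <= Y j (S m))
    by (intros j; unfold Y; pose proof (u_lt_succ_index j (S m) ltac:(lia)); lra).
  destruct (ex_finite_lim_seq_decr (fun j => Y j (S m)) 0 Hdec
              (fun j => proj1 (u_below_limit j) (S m))) as [l Hl].
  replace 0 with l; [exact Hl|].
  apply (rec_chain_limit Y (S m)); [lia| |intros k Hk|exact Hl].
  - intros j. pose proof (solves_rec_minus _ _ _ _ u_limit_rec (u_rec (S j)) (S m)) as H.
    unfold row_source in H. cbn [delta prev_row] in H. rewrite Rplus_0_l, dsum_minus in H.
    exact H.
  - specialize (IH k Hk). unfold Y.
    replace 0 with (u_limit k - u_limit k) by ring.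
    apply is_lim_seq_minus'; [apply is_lim_seq_const|exact IH].
Qed.

(** * Truncated digit measures *)

(* Mass [b^-r] at every grid point [t / b^r] ([t < b^r]) whose [r] low digits contain
   exactly [j] copies of [d], for levels [r <= K]; its moments increase to [u j m]. *)
Definition level_sum r j (g : R -> R) :=
  sumR (b ^ r) (fun t => if Nat.eqb (lowcount b d r t) j then g (INR t / B ^ r) / B ^ r else 0).

Definition trunc_sum K j g := sumR (S K) (fun r => level_sum r j g).

Definition trunc_moment K j m := trunc_sum K j (fun x => x ^ m).

Lemma level_sum_ext r j g h : (forall x, g x = h x) -> level_sum r j g = level_sum r j h.
Proof. intros H. apply sumR_ext. intros. now rewrite H. Qed.

Lemma level_sum_plus r j g h : level_sum r j (fun x => g x + h x) = level_sum r j g + level_sum r j h.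
Proof.
  unfold level_sum. rewrite <- sumR_plus. apply sumR_ext; intros.
  destruct (Nat.eqb _ j); [field; apply Rgt_not_eq, pow_B_pos|ring].
Qed.

Lemma level_sum_scal r j c g : level_sum r j (fun x => c * g x) = c * level_sum r j g.
Proof.
  unfold level_sum. rewrite <- sumR_scal_l. apply sumR_ext; intros.
  destruct (Nat.eqb _ j); [field; apply Rgt_not_eq, pow_B_pos|ring].
Qed.

Lemma level_sum_minus r j g h : level_sum r j g - level_sum r j h = level_sum r j (fun x => g x - h x).
Proof.
  rewrite (level_sum_ext r j (fun x => g x - h x) (fun x => g x + (-1) * h x)) by (intros; ring).
  rewrite level_sum_plus, level_sum_scal. ring.
Qed.

Lemma level_sum_sumR r j n (F : nat -> R -> R) :
  level_sum r j (fun x => sumR n (fun i => F i x)) = sumR n (fun i => level_sum r j (F i)).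
Proof.
  induction n as [|n IH].
  - apply sumR_eq0. intros. cbn [sumR]. destruct (Nat.eqb _ j); lra.
  - simpl. rewrite level_sum_plus, IH. reflexivity.
Qed.

Lemma grid_point_bounds r t : (t < b ^ r)%nat -> 0 <= INR t / B ^ r <= 1 - / B ^ r.
Proof.
  intros Ht. pose proof (pow_B_pos r). split.
  - apply Rdiv_le_0_compat; [apply pos_INR|lra].
  - assert (INR t + 1 <= B ^ r) by (unfold B; rewrite <- pow_INR, <- S_INR; apply le_INR; lia).
    apply (Rmult_le_reg_r (B ^ r)); [lra|]. field_simplify; lra.
Qed.

Lemma level_sum_le_grid r j g h :
  (forall x, 0 <= x <= 1 - / B ^ r -> g x <= h x) -> level_sum r j g <= level_sum r j h.
Proof.
  intros H. apply sumR_le. intros t Ht. destruct (Nat.eqb _ j); [|lra].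
  apply Rmult_le_compat_r; [left; apply Rinv_0_lt_compat, pow_B_pos|].
  now apply H, grid_point_bounds.
Qed.

Lemma level_sum_le r j g h :
  (forall x, 0 <= x <= 1 -> g x <= h x) -> level_sum r j g <= level_sum r j h.
Proof.
  intros H. apply level_sum_le_grid. intros x Hx. apply H.
  pose proof (Rinv_0_lt_compat _ (pow_B_pos r)). lra.
Qed.

Lemma level_sum_nonneg r j g : (forall x, 0 <= x <= 1 -> 0 <= g x) -> 0 <= level_sum r j g.
Proof.
  intros H. replace 0 with (level_sum r j (fun _ => 0)) by (apply sumR_eq0; intros; destruct (Nat.eqb _ j); lra).
  now apply level_sum_le.
Qed.

Lemma level_sum_0 j g : level_sum 0 j g = match j with O => g 0 | _ => 0 end.
Proof. unfold level_sum. destruct j; simpl; [|lra]. replace (0 / 1) with 0 by field. field. Qed.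

(* Splitting off the leading digit [a] of [t] maps the grid of level [r + 1] onto [b]
   scaled copies [(a + y) / b] of the grid of level [r]. *)
Lemma level_sum_succ r j g : level_sum (S r) j g = / B * sumR b (fun a =>
  if Nat.eqb a d then match j with O => 0 | S j' => level_sum r j' (fun y => g ((INR a + y) / B)) end
  else level_sum r j (fun y => g ((INR a + y) / B))).
Proof.
  unfold level_sum. change (b ^ S r)%nat with (b * b ^ r)%nat.
  rewrite sumR_mul_range, <- sumR_scal_l. apply sumR_ext. intros a Ha.
  assert (Hx : forall t, INR (a * b ^ r + t) / B ^ S r = (INR a + INR t / B ^ r) / B).
  { intros t. rewrite plus_INR, mult_INR, pow_INR. fold B. simpl pow.
    pose proof (pow_B_pos r). pose proof B_ge2. field. lra. }
  assert (Hy : forall y, y / B ^ S r = / B * (y / B ^ r)).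
  { intros y. simpl pow. pose proof (pow_B_pos r). pose proof B_ge2. field. lra. }
  rewrite (sumR_ext _ _ (fun t => / B * (if Nat.eqb a d then match j with O => 0 | S j' =>
      (if Nat.eqb (lowcount b d r t) j' then g ((INR a + INR t / B ^ r) / B) / B ^ r else 0) end
      else (if Nat.eqb (lowcount b d r t) j then g ((INR a + INR t / B ^ r) / B) / B ^ r else 0)))).
  - rewrite sumR_scal_l. f_equal. destruct (Nat.eqb a d); [destruct j|]; auto.
    apply sumR_eq0; auto.
  - intros t Ht. rewrite lowcount_top, Hx, Hy by lia.
    destruct (Nat.eqb_spec a d), j as [|j]; simpl;
      try destruct (Nat.eqb (lowcount b d r t) _); ring.
Qed.

Lemma level_sum_binomial r j a m :
  B ^ S m * (/ B * level_sum r j (fun y => ((INR a + y) / B) ^ m)) =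
  sumR (S m) (fun i => Binomial.C m i * INR a ^ i * level_sum r j (fun y => y ^ (m - i))).
Proof.
  rewrite (level_sum_ext r j _ (fun y => / B ^ m *
             sumR (S m) (fun i => Binomial.C m i * INR a ^ i * y ^ (m - i)))).
  - rewrite level_sum_scal, level_sum_sumR.
    rewrite (sumR_ext _ (fun i => level_sum r j _)
               (fun i => Binomial.C m i * INR a ^ i * level_sum r j (fun y => y ^ (m - i)))).
    + simpl pow. pose proof B_ge2. pose proof (pow_B_pos m). field. split; lra.
    + intros i _. rewrite <- level_sum_scal. apply level_sum_ext. intros; ring.
  - intros y. rewrite Rdiv_def, Rpow_mult_distr, binomial, sum_f_R0_sumR, pow_inv. ring.
Qed.

Lemma trunc_moment_0 j m : B ^ S m * trunc_moment 0 j m = delta j m.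
Proof.
  unfold trunc_moment, trunc_sum. simpl sumR. rewrite level_sum_0.
  destruct j, m; simpl; unfold B; ring.
Qed.

Lemma trunc_moment_succ K j m :
  B ^ S m * trunc_moment (S K) j m = delta j m + digit_sum (trunc_moment K) j m.
Proof.
  unfold trunc_moment, trunc_sum. rewrite sumR_succ_l, level_sum_0, Rmult_plus_distr_l. f_equal.
  - destruct j, m; simpl; unfold B; ring.
  - rewrite <- sumR_scal_l.
    rewrite (sumR_ext _ _ (fun r => sumR b (fun a => sumR (S m) (fun i =>
        Binomial.C m i * INR a ^ i *
        (if Nat.eqb a d then match j with O => 0 | S j' => level_sum r j' (fun y => y ^ (m - i)) end
         else level_sum r j (fun y => y ^ (m - i))))))).
    + unfold digit_sum. rewrite sumR_swap. apply sumR_ext. intros a _. rewrite sumR_swap.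
      apply sumR_ext. intros i _. rewrite sumR_scal_l. f_equal.
      destruct (Nat.eqb a d); [destruct j; [apply sumR_eq0|]|]; auto.
    + intros r _. rewrite level_sum_succ, <- Rmult_assoc, (Rmult_comm (B ^ S m)), Rmult_assoc.
      rewrite <- !sumR_scal_l. apply sumR_ext. intros a _.
      rewrite <- Rmult_assoc, (Rmult_comm (/ B)), Rmult_assoc.
      destruct (Nat.eqb a d); [destruct j|]; rewrite ?level_sum_binomial; auto.
      rewrite !Rmult_0_r. symmetry; apply sumR_eq0; intros; ring.
Qed.

Lemma digit_sum_le X Y j m : (forall j m, X j m <= Y j m) -> digit_sum X j m <= digit_sum Y j m.
Proof.
  intros H. apply sumR_le; intros a _. apply sumR_le; intros i _.
  apply Rmult_le_compat_l; [apply Rmult_le_pos; [apply binom_nonneg|apply pow_le, pos_INR]|].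
  destruct (Nat.eqb a d), j; simpl; auto; lra.
Qed.

Lemma is_lim_seq_digit_sum (X : nat -> nat -> nat -> R) (L : nat -> nat -> R) j m :
  (forall j m, is_lim_seq (fun N => X N j m) (L j m)) ->
  is_lim_seq (fun N => digit_sum (X N) j m) (digit_sum L j m).
Proof.
  intros H. apply is_lim_seq_sumR; intros a _. apply is_lim_seq_sumR; intros i _.
  destruct (Nat.eqb a d), j as [|j]; cbn [prev_row];
    [apply is_lim_seq_const|apply (is_lim_seq_scal_l _ _ (L _ _)), H..].
Qed.

Lemma trunc_moment_nonneg K j m : 0 <= trunc_moment K j m.
Proof.
  apply sumR_nonneg; intros r _. apply level_sum_nonneg. intros x Hx. apply pow_le; lra.
Qed.

Lemma trunc_moment_le_u K j m : trunc_moment K j m <= u b d j m.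
Proof.
  revert j m. induction K as [|K IH]; intros j m;
    apply (Rmult_le_reg_l (B ^ S m)); try apply pow_B_pos;
    rewrite (u_digit_fixpoint j m).
  - rewrite trunc_moment_0.
    pose proof (digit_sum_le (fun _ _ => 0) (u b d) j m u_nonneg) as H.
    assert (digit_sum (fun _ _ => 0) j m = 0) as H0.
    { apply sumR_eq0; intros a _. apply sumR_eq0; intros i _. destruct (Nat.eqb a d), j; simpl; ring. }
    lra.
  - rewrite trunc_moment_succ. pose proof (digit_sum_le _ (u b d) j m IH). lra.
Qed.

Lemma trunc_moment_le_succ K j m : trunc_moment K j m <= trunc_moment (S K) j m.
Proof.
  unfold trunc_moment, trunc_sum. change (sumR (S (S K)) ?f) with (sumR (S K) f + f (S K)).
  assert (0 <= level_sum (S K) j (fun x => x ^ m)); [|lra].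
  apply level_sum_nonneg. intros x Hx. apply pow_le; lra.
Qed.

(* The limit of the truncations is again a fixed point of the digit recurrence, hence [u]. *)
Lemma trunc_moment_lim j m : is_lim_seq (fun K => trunc_moment K j m) (u b d j m).
Proof.
  set (L := fun j m => real (Lim_seq (fun K => trunc_moment K j m))).
  assert (HL : forall j m, is_lim_seq (fun K => trunc_moment K j m) (L j m)).
  { intros j' m'.
    destruct (ex_finite_lim_seq_incr _ _ (fun K => trunc_moment_le_succ K j' m')
                (fun K => trunc_moment_le_u K j' m')) as [l Hl].
    unfold L. now rewrite (is_lim_seq_unique _ _ Hl). }
  rewrite <- (digit_fixpoint_unique L); [apply HL|].
  intros j' m'. apply (is_lim_seq_finite_unique (fun K => B ^ S m' * trunc_moment (S K) j' m')).
  - apply (is_lim_seq_scal_l _ _ (L j' m')), (is_lim_seq_incr_1 (fun K => trunc_moment K j' m')), HL.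
  - eapply is_lim_seq_ext; [intros K; symmetry; apply trunc_moment_succ|].
    apply is_lim_seq_plus'; [apply is_lim_seq_const|now apply is_lim_seq_digit_sum].
Qed.

Lemma trunc_moment_gap_lower K j m :
  / B ^ K * trunc_moment K j m <= trunc_moment K j m - trunc_moment K j (S m).
Proof.
  unfold trunc_moment, trunc_sum. rewrite <- sumR_minus, <- sumR_scal_l.
  apply sumR_le; intros r Hr. rewrite level_sum_minus, <- level_sum_scal.
  apply level_sum_le_grid. intros x Hx.
  assert (/ B ^ K <= / B ^ r).
  { apply Rinv_le_contravar; [apply pow_B_pos|]. apply Rle_pow; [pose proof B_ge2; lra|lia]. }
  assert (0 <= x ^ m) by (apply pow_le; lra).
  simpl pow. assert (x ^ m * / B ^ K <= x ^ m * (1 - x)) by (apply Rmult_le_compat_l; lra). nra.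
Qed.

Lemma trunc_moment_gap_le_succ K j m :
  trunc_moment K j m - trunc_moment K j (S m) <= trunc_moment (S K) j m - trunc_moment (S K) j (S m).
Proof.
  unfold trunc_moment, trunc_sum. change (sumR (S (S K)) ?f) with (sumR (S K) f + f (S K)).
  assert (0 <= level_sum (S K) j (fun x => x ^ m) - level_sum (S K) j (fun x => x ^ S m)); [|lra].
  rewrite level_sum_minus. apply level_sum_nonneg. intros x Hx. simpl.
  assert (0 <= x ^ m) by (apply pow_le; lra). nra.
Qed.

Lemma u_gap_lower K j m : / B ^ K * trunc_moment K j m <= u b d j m - u b d j (S m).
Proof.
  eapply Rle_trans; [apply trunc_moment_gap_lower|].
  apply (is_lim_seq_incr_compare (fun K => trunc_moment K j m - trunc_moment K j (S m))).
  - apply is_lim_seq_minus'; apply trunc_moment_lim.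
  - intros; apply trunc_moment_gap_le_succ.
Qed.

Lemma u_succ_moment_le j m : u b d j (S m) <= u b d j m.
Proof.
  pose proof (u_gap_lower 0 j m) as H. simpl in H. rewrite Rinv_1 in H.
  pose proof (trunc_moment_nonneg 0 j m). lra.
Qed.

(* A zero gap at [m >= 1] forces every truncated moment, hence [u j m], to vanish. *)
Lemma u_succ_moment_lt j m :
  u b d j (S m) < u b d j m \/ (u b d j (S m) = 0 /\ u b d j m = 0).
Proof.
  destruct m as [|m].
  - left. rewrite u_0. pose proof (proj2 (u_below_limit j) 1%nat ltac:(lia)).
    unfold u_limit in H. simpl INR in H. pose proof B_ge2. lra.
  - destruct (Req_dec (u b d j (S (S m))) (u b d j (S m))) as [Heq|Hne].
    2: { left; pose proof (u_succ_moment_le j (S m)); lra. }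
    right. assert (HU : forall K, trunc_moment K j (S m) <= 0).
    { intros K. pose proof (u_gap_lower K j (S m)). rewrite Heq, Rminus_diag in H.
      pose proof (Rinv_0_lt_compat _ (pow_B_pos K)). nra. }
    assert (u b d j (S m) <= 0).
    { pose proof (is_lim_seq_le _ _ _ _ HU (trunc_moment_lim j (S m)) (is_lim_seq_const 0)) as H.
      exact H. }
    pose proof (u_nonneg j (S m)). lra.
Qed.

(** * Expansion of [1 / (n + x)] against the digit measures *)

Lemma trunc_sum_le K j g h :
  (forall x, 0 <= x <= 1 -> g x <= h x) -> trunc_sum K j g <= trunc_sum K j h.
Proof. intros H. apply sumR_le. intros; now apply level_sum_le. Qed.

Lemma trunc_sum_ext K j g h :
  (forall x, 0 <= x <= 1 -> g x = h x) -> trunc_sum K j g = trunc_sum K j h.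
Proof. intros H. apply Rle_antisym; apply trunc_sum_le; intros x Hx; rewrite H; auto; lra. Qed.

Lemma trunc_sum_plus K j g h : trunc_sum K j (fun x => g x + h x) = trunc_sum K j g + trunc_sum K j h.
Proof. unfold trunc_sum. rewrite <- sumR_plus. apply sumR_ext; intros. apply level_sum_plus. Qed.

Lemma trunc_sum_scal K j c g : trunc_sum K j (fun x => c * g x) = c * trunc_sum K j g.
Proof. unfold trunc_sum. rewrite <- sumR_scal_l. apply sumR_ext; intros. apply level_sum_scal. Qed.

Lemma trunc_sum_sumR K j n (F : nat -> R -> R) :
  trunc_sum K j (fun x => sumR n (fun i => F i x)) = sumR n (fun i => trunc_sum K j (F i)).
Proof. unfold trunc_sum. rewrite sumR_swap. apply sumR_ext; intros. apply level_sum_sumR. Qed.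

Definition trunc_inverse K j (n : nat) := trunc_sum K j (fun x => / (INR n + x)).

Lemma trunc_inverse_approx K j n M : (1 <= n)%nat ->
  Rabs (trunc_inverse K j n - sumR (S M) (fun m => (-1) ^ m * trunc_moment K j m / INR n ^ S m))
  <= trunc_moment K j (S M).
Proof.
  intros Hn. assert (HN : 1 <= INR n) by (apply (le_INR 1); lia).
  set (rem := fun x => (- x) ^ S M / (INR n ^ S M * (INR n + x))).
  unfold trunc_inverse.
  rewrite (trunc_sum_ext K j _ (fun x =>
             sumR (S M) (fun m => ((-1) ^ m / INR n ^ S m) * x ^ m) + rem x)).
  - rewrite trunc_sum_plus, trunc_sum_sumR.
    rewrite (sumR_ext (S M) (fun i => trunc_sum K j _)
               (fun m => (-1) ^ m * trunc_moment K j m / INR n ^ S m)).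
    + replace (_ + trunc_sum K j rem - _) with (trunc_sum K j rem) by ring.
      unfold trunc_moment. apply Rabs_le. split.
      * replace (- trunc_sum K j (fun x => x ^ S M)) with (trunc_sum K j (fun x => -1 * x ^ S M))
          by (rewrite trunc_sum_scal; ring).
        apply trunc_sum_le. intros x Hx.
        pose proof (geometric_remainder_bound (INR n) x M HN ltac:(lra)) as Hb.
        apply Rabs_le_between in Hb. unfold rem. lra.
      * apply trunc_sum_le. intros x Hx.
        pose proof (geometric_remainder_bound (INR n) x M HN ltac:(lra)) as Hb.
        apply Rabs_le_between in Hb. unfold rem. lra.
    + intros m _. rewrite trunc_sum_scal. unfold trunc_moment. field. apply pow_nonzero; lra.
  - intros x Hx. rewrite (inv_geometric (INR n) x M) by lra. f_equal.
    apply sumR_ext; intros. field. apply pow_nonzero; lra.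
Qed.

Lemma trunc_inverse_le_succ K j n : (1 <= n)%nat -> trunc_inverse K j n <= trunc_inverse (S K) j n.
Proof.
  intros Hn. assert (HN : 1 <= INR n) by (apply (le_INR 1); lia).
  unfold trunc_inverse, trunc_sum. change (sumR (S (S K)) ?f) with (sumR (S K) f + f (S K)).
  assert (0 <= level_sum (S K) j (fun x => / (INR n + x))); [|lra].
  apply level_sum_nonneg. intros x Hx. apply Rlt_le, Rinv_0_lt_compat. lra.
Qed.

Lemma trunc_inverse_le_u K j n : (1 <= n)%nat -> trunc_inverse K j n <= u b d j 0.
Proof.
  intros Hn. assert (HN : 1 <= INR n) by (apply (le_INR 1); lia).
  eapply Rle_trans; [|apply (trunc_moment_le_u K j 0)].
  apply trunc_sum_le. intros x Hx. simpl. rewrite <- Rinv_1. apply Rinv_le_contravar; lra.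
Qed.

Definition inverse_moment j n := real (Lim_seq (fun K => trunc_inverse K j n)).

Lemma trunc_inverse_lim j n : (1 <= n)%nat ->
  is_lim_seq (fun K => trunc_inverse K j n) (inverse_moment j n).
Proof.
  intros Hn.
  destruct (ex_finite_lim_seq_incr _ _ (fun K => trunc_inverse_le_succ K j n Hn)
              (fun K => trunc_inverse_le_u K j n Hn)) as [l Hl].
  unfold inverse_moment. now rewrite (is_lim_seq_unique _ _ Hl).
Qed.

Lemma u_limit_lim0 : is_lim_seq (fun M => u_limit (S M)) 0.
Proof.
  unfold u_limit.
  assert (H : is_lim_seq (fun M => INR (S (S M))) p_infty).
  { apply (is_lim_seq_incr_1 (fun M => INR (S M))), (is_lim_seq_incr_1 INR), is_lim_seq_INR. }
  apply is_lim_seq_inv in H; [|discriminate]. simpl in H.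
  apply (is_lim_seq_scal_l _ B) in H. simpl in H. rewrite Rmult_0_r in H.
  exact H.
Qed.

(* The error of the [M]-th partial sum is at most [u j (M + 1) <= b / (M + 2)]. *)
Lemma alt_moment_sum_lim j n : (1 <= n)%nat ->
  is_lim_seq (fun M => sumR (S M) (fun m => (-1) ^ m * u b d j m / INR n ^ S m)) (inverse_moment j n).
Proof.
  intros Hn. assert (HN : 1 <= INR n) by (apply (le_INR 1); lia).
  set (Q := fun M => sumR (S M) (fun m => (-1) ^ m * u b d j m / INR n ^ S m)).
  assert (HQ : forall M, is_lim_seq
             (fun K => sumR (S M) (fun m => (-1) ^ m * trunc_moment K j m / INR n ^ S m)) (Q M)).
  { intros M. apply is_lim_seq_sumR. intros m _.
    eapply is_lim_seq_ext with (fun K => (-1) ^ m / INR n ^ S m * trunc_moment K j m).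
    - intros K. field. apply pow_nonzero; lra.
    - replace ((-1) ^ m * u b d j m / INR n ^ S m) with ((-1) ^ m / INR n ^ S m * u b d j m)
        by (field; apply pow_nonzero; lra).
      apply (is_lim_seq_scal_l _ _ (u b d j m)), trunc_moment_lim. }
  assert (Hb : forall M, Rabs (inverse_moment j n - Q M) <= u_limit (S M)).
  { intros M.
    pose proof (is_lim_seq_abs _ _ (is_lim_seq_minus' _ _ _ _ (trunc_inverse_lim j n Hn) (HQ M))) as Hl.
    apply (is_lim_seq_le _ _ _ _ (fun K => Rle_trans _ _ _ (trunc_inverse_approx K j n M Hn)
             (Rle_trans _ _ _ (trunc_moment_le_u K j (S M)) (u_le_limit j (S M))))
             Hl (is_lim_seq_const _)). }
  apply (is_lim_seq_le_le (fun M => inverse_moment j n - u_limit (S M)) _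
                          (fun M => inverse_moment j n + u_limit (S M))).
  - intros M. specialize (Hb M). apply Rabs_le_between in Hb. lra.
  - replace (Finite (inverse_moment j n)) with (Finite (inverse_moment j n - 0)) by (f_equal; ring).
    apply is_lim_seq_minus'; [apply is_lim_seq_const|apply u_limit_lim0].
  - replace (Finite (inverse_moment j n)) with (Finite (inverse_moment j n + 0)) by (f_equal; ring).
    apply is_lim_seq_plus'; [apply is_lim_seq_const|apply u_limit_lim0].
Qed.

(** * Summing the Irwin series by blocks *)

Variable k : nat.
Let irw := irwin_term b d k.

Lemma irwin_term_nonneg n : 0 <= irw n.
Proof.
  unfold irw, irwin_term. destruct (Nat.leb_spec 1 n); simpl; [|lra].
  destruct (Nat.eqb _ k); [|lra]. apply Rlt_le, Rinv_0_lt_compat, (lt_INR 0); lia.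
Qed.

Lemma irwin_term_shift n r t : (1 <= n)%nat -> (t < b ^ r)%nat ->
  irw (n * b ^ r + t) = if Nat.leb (dcount b d n) k then
    (if Nat.eqb (lowcount b d r t) (k - dcount b d n) then / (INR n + INR t / B ^ r) / B ^ r else 0)
  else 0.
Proof.
  intros Hn Ht. unfold irw, irwin_term.
  assert (0 < b ^ r)%nat by (apply Nat.neq_0_lt_0, Nat.pow_nonzero; lia).
  replace (Nat.leb 1 (n * b ^ r + t)) with true by (symmetry; apply Nat.leb_le; nia).
  rewrite dcount_shift by lia. simpl andb.
  destruct (Nat.leb_spec (dcount b d n) k), (Nat.eqb_spec (lowcount b d r t) (k - dcount b d n)),
    (Nat.eqb_spec (dcount b d n + lowcount b d r t) k); try lia; try reflexivity.
  rewrite plus_INR, mult_INR, pow_INR. fold B.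
  pose proof (pow_B_pos r). assert (0 < INR n) by (apply (lt_INR 0); lia).
  assert (0 <= INR t / B ^ r) by (apply Rdiv_le_0_compat; [apply pos_INR|lra]).
  assert (0 < INR n * B ^ r + INR t) by (pose proof (pos_INR t); nra).
  field. repeat split; lra.
Qed.

Lemma irwin_block_sum n r : (1 <= n)%nat ->
  sumR (b ^ r) (fun t => irw (n * b ^ r + t)) =
  if Nat.leb (dcount b d n) k then level_sum r (k - dcount b d n) (fun x => / (INR n + x)) else 0.
Proof.
  intros Hn. rewrite (sumR_ext _ _ _ (fun t Ht => irwin_term_shift n r t Hn Ht)).
  destruct (Nat.leb (dcount b d n) k); [reflexivity|now apply sumR_eq0].
Qed.

(* The integers below [hi * b^N] are those below [lo], followed, for each number of
   trailing digits [r <= N], by the [n * b^r + t] with [lo <= n < hi] and [t < b^r]. *)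
Lemma irwin_partial_blocks lo hi N : (1 <= lo)%nat -> hi = (lo * b)%nat ->
  sumR (hi * b ^ N) irw = sumR lo irw +
  sumR (S N) (fun r => sumR (hi - lo) (fun i => sumR (b ^ r) (fun t => irw ((lo + i) * b ^ r + t)%nat))).
Proof.
  intros Hlo Hhi. induction N as [|N IH].
  - rewrite Nat.pow_0_r, Nat.mul_1_r. replace hi with (lo + (hi - lo))%nat at 1 by nia.
    rewrite sumR_add_range. simpl (sumR 1 _). rewrite Rplus_0_l. f_equal.
    apply sumR_ext. intros i _. simpl. rewrite Nat.mul_1_r, Nat.add_0_r. ring.
  - replace (hi * b ^ S N)%nat with (hi * b ^ N + (hi - lo) * b ^ S N)%nat.
    2: { rewrite Nat.mul_sub_distr_r, Nat.pow_succ_r'. subst hi.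
         assert (lo * b * (b * b ^ N) >= lo * b ^ N * b)%nat by nia. nia. }
    rewrite sumR_add_range, IH, sumR_mul_range.
    change (sumR (S (S N)) ?f) with (sumR (S N) f + f (S N)). rewrite Rplus_assoc. do 2 f_equal.
    apply sumR_ext. intros i _. apply sumR_ext. intros t _. f_equal.
    rewrite Nat.pow_succ_r'. subst hi. nia.
Qed.

Lemma irwin_partial_trunc lo hi N : (1 <= lo)%nat -> hi = (lo * b)%nat ->
  sumR (hi * b ^ N) irw = sumR lo irw + sumR (hi - lo) (fun i =>
    if Nat.leb (dcount b d (lo + i)) k then trunc_inverse N (k - dcount b d (lo + i)) (lo + i) else 0).
Proof.
  intros Hlo Hhi. rewrite (irwin_partial_blocks lo hi N) by assumption. f_equal.
  rewrite sumR_swap. apply sumR_ext. intros i _.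
  rewrite (sumR_ext _ _ _ (fun r _ => irwin_block_sum (lo + i) r ltac:(lia))).
  destruct (Nat.leb (dcount b d (lo + i)) k); [reflexivity|now apply sumR_eq0].
Qed.

Variable l : nat.
Hypothesis hl : (1 <= l)%nat.
Let lo := (b ^ (l - 1))%nat.
Let hi := (b ^ l)%nat.

Lemma lo_pos : (1 <= lo)%nat.
Proof. unfold lo. assert (b ^ (l - 1) <> 0)%nat by (apply Nat.pow_nonzero; lia). lia. Qed.

Lemma hi_eq : hi = (lo * b)%nat.
Proof. unfold hi, lo. replace l with (S (l - 1)) at 1 by lia. rewrite Nat.pow_succ_r'. lia. Qed.

Definition block_sum (F : nat -> nat -> R) :=
  sumR (hi - lo) (fun i => if Nat.leb (dcount b d (lo + i)) k
                           then F (k - dcount b d (lo + i))%nat (lo + i)%nat else 0).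

Lemma irwin_series : is_series irw (sumR lo irw + block_sum inverse_moment).
Proof.
  set (X := sumR lo irw + block_sum inverse_moment).
  set (s := sum_n irw).
  assert (Hs : forall N, s N = sumR (S N) irw) by (intros; apply sum_n_sumR).
  assert (Hinc : forall N, s N <= s (S N))
    by (intros; rewrite !Hs; apply sumR_le_range; auto using irwin_term_nonneg).
  assert (Hpos : forall N, (1 <= hi * b ^ N)%nat).
  { intros N. pose proof lo_pos. rewrite hi_eq.
    assert (b ^ N <> 0)%nat by (apply Nat.pow_nonzero; lia). nia. }
  set (phi := fun N => (hi * b ^ N - 1)%nat).
  assert (Hphi : forall N, (phi N < phi (S N))%nat)
    by (intros N; unfold phi; rewrite Nat.pow_succ_r'; specialize (Hpos N); nia).
  assert (Hsub : is_lim_seq (fun N => s (phi N)) X).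
  { apply (is_lim_seq_ext (fun N => sumR lo irw + block_sum (trunc_inverse N))).
    - intros N. rewrite Hs. unfold phi. replace (S (hi * b ^ N - 1)) with (hi * b ^ N)%nat
        by (specialize (Hpos N); lia).
      symmetry. apply (irwin_partial_trunc lo hi N lo_pos hi_eq).
    - apply is_lim_seq_plus'; [apply is_lim_seq_const|]. apply is_lim_seq_sumR. intros i _.
      destruct (Nat.leb _ k); [|apply is_lim_seq_const]. apply trunc_inverse_lim.
      pose proof lo_pos; lia. }
  assert (Hbd : forall N, s N <= X).
  { intros N. apply Rle_trans with (s (phi N)).
    - rewrite !Hs. apply sumR_le_range; [|apply irwin_term_nonneg].
      enough (N <= phi N)%nat by lia.
      induction N as [|N IH]; [lia|]. specialize (Hphi N). lia.
    - apply (is_lim_seq_incr_compare (fun N => s (phi N))); auto. intros n.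
      rewrite !Hs. apply sumR_le_range; [specialize (Hphi n); lia|apply irwin_term_nonneg]. }
  destruct (ex_finite_lim_seq_incr s X Hinc Hbd) as [Y HY].
  replace X with Y; [exact HY|].
  apply (is_lim_seq_finite_unique (fun N => s (phi N))); [|exact Hsub].
  apply (is_lim_seq_subseq s Y phi); [apply eventually_subseq; auto|exact HY].
Qed.

Definition block_moment m := block_sum (fun j n => u b d j m / INR n ^ S m).

Lemma alt_block_moment_sum M :
  sumR (S M) (fun m => (-1) ^ m * block_moment m) =
  block_sum (fun j n => sumR (S M) (fun m => (-1) ^ m * u b d j m / INR n ^ S m)).
Proof.
  unfold block_moment, block_sum.
  rewrite (sumR_ext _ _ (fun m => sumR (hi - lo) (fun i => (-1) ^ m *
             (if Nat.leb (dcount b d (lo + i)) k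
              then u b d (k - dcount b d (lo + i)) m / INR (lo + i) ^ S m else 0))))
    by (intros; now rewrite sumR_scal_l).
  rewrite sumR_swap. apply sumR_ext. intros i _. destruct (Nat.leb _ k).
  - apply sumR_ext; intros; unfold Rdiv; ring.
  - apply sumR_eq0; intros; ring.
Qed.

Lemma alt_block_moment_series :
  is_series (fun m => (-1) ^ S m * block_moment (S m)) (block_sum inverse_moment - block_moment 0).
Proof.
  assert (H : is_lim_seq (fun M => sumR (S M) (fun m => (-1) ^ m * block_moment m))
                         (block_sum inverse_moment)).
  { eapply is_lim_seq_ext; [intros M; symmetry; apply alt_block_moment_sum|].
    apply is_lim_seq_sumR. intros i _. destruct (Nat.leb _ k); [|apply is_lim_seq_const].
    apply alt_moment_sum_lim. pose proof lo_pos; lia. }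
  apply (is_lim_seq_incr_1 (fun M => sumR (S M) (fun m => (-1) ^ m * block_moment m))) in H.
  change (is_lim_seq (sum_n (fun m => (-1) ^ S m * block_moment (S m)))
                     (block_sum inverse_moment - block_moment 0)).
  eapply is_lim_seq_ext; [|apply (is_lim_seq_minus' _ _ _ _ H (is_lim_seq_const (block_moment 0)))].
  intros M. cbv beta. rewrite sum_n_sumR, (sumR_succ_l (S M)), pow_O. ring.
Qed.

Lemma block_moment_0 :
  block_moment 0 = B * fsum lo hi (fun n => if Nat.leb (dcount b d n) k then / INR n else 0).
Proof.
  unfold block_moment, block_sum. rewrite fsum_sumR, <- sumR_scal_l.
  apply sumR_ext. intros i _. destruct (Nat.leb _ k); [|ring].
  rewrite u_0. pose proof lo_pos. simpl. field. apply not_0_INR. lia.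
Qed.

Lemma irwin_head_sum :
  sumR lo irw = fsum 1 lo (fun n => if Nat.eqb (dcount b d n) k then / INR n else 0).
Proof.
  rewrite fsum_sumR. pose proof lo_pos.
  replace lo with (S (lo - 1)) at 1 by lia. rewrite sumR_succ_l.
  unfold irw, irwin_term at 1. simpl. rewrite Rplus_0_l. reflexivity.
Qed.

Lemma irwin_expansion :
  let tail := fun m => (-1) ^ S m * fsum lo hi (fun n =>
      if Nat.leb (dcount b d n) k then u b d (k - dcount b d n) (S m) / INR n ^ S (S m) else 0) in
  ex_series irw /\ ex_series tail /\
  irwin_sum b d k =
    fsum 1 lo (fun n => if Nat.eqb (dcount b d n) k then / INR n else 0)
    + INR b * fsum lo hi (fun n => if Nat.leb (dcount b d n) k then / INR n else 0)
    + Series tail.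
Proof.
  intros tail.
  assert (HT : is_series tail (block_sum inverse_moment - block_moment 0)).
  { eapply is_series_ext; [|apply alt_block_moment_series].
    intros m. unfold tail. now rewrite fsum_sumR. }
  split; [eexists; apply irwin_series|]. split; [eexists; exact HT|].
  unfold irwin_sum. rewrite (is_series_unique (irwin_term b d k) _ irwin_series), (is_series_unique _ _ HT).
  rewrite irwin_head_sum, block_moment_0. unfold B; ring.
Qed.

End Irwin.

Lemma u_eq0_cases b d j m : (2 <= b)%nat -> (d < b)%nat -> (1 <= m)%nat ->
  u b d j m = 0 -> j = 0%nat /\ b = 2%nat /\ d = 1%nat.
Proof.
  intros hb hd hm H0.
  destruct (Nat.eq_dec j 0), (Nat.eq_dec b 2), (Nat.eq_dec d 1); auto;
    pose proof (u_pos b d hb hd j m hm ltac:(lia)); lra.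
Qed.

Theorem mainTheorem1 (b d : nat) (hb : (2 <= b)%nat) (hd : (d < b)%nat) :
  (forall k l : nat, (1 <= l)%nat ->
     ex_series (irwin_term b d k) /\
     ex_series (fun m : nat => (-1) ^ (S m) *
        fsum (b ^ (l - 1)) (b ^ l) (fun n =>
          if Nat.leb (dcount b d n) k
          then u b d (k - dcount b d n) (S m) / INR n ^ (S (S m)) else 0)) /\
     irwin_sum b d k =
       fsum 1 (b ^ (l - 1)) (fun n => if Nat.eqb (dcount b d n) k then / INR n else 0)
       + INR b * fsum (b ^ (l - 1)) (b ^ l)
                  (fun n => if Nat.leb (dcount b d n) k then / INR n else 0)
       + Series (fun m : nat => (-1) ^ (S m) *
           fsum (b ^ (l - 1)) (b ^ l) (fun n =>
             if Nat.leb (dcount b d n) k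
             then u b d (k - dcount b d n) (S m) / INR n ^ (S (S m)) else 0)))
  /\
  (forall j m : nat, (1 <= m)%nat ->
     0 <= u b d j m /\ (u b d j m = 0 -> j = 0%nat /\ b = 2%nat /\ d = 1%nat))
  /\
  (forall j m : nat,
     u b d j (S m) <= u b d j m /\
     (u b d j (S m) < u b d j m \/ (u b d j (S m) = 0 /\ u b d j m = 0)))
  /\
  (forall m : nat, (1 <= m)%nat ->
     (forall j : nat, u b d j m < u b d (S j) m) /\
     is_lim_seq (fun j => u b d j m) (INR b / INR (m + 1))).
Proof.
  split; [|split; [|split]].
  - intros k l hl. exact (irwin_expansion b d hb hd k l hl).
  - intros j m hm. split; [apply u_nonneg; assumption|now apply u_eq0_cases].
  - intros j m. split; [apply u_succ_moment_le|apply u_succ_moment_lt]; assumption.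
  - intros m hm. split; [intros j; now apply u_lt_succ_index|].
    rewrite Nat.add_1_r. apply u_lim_index; assumption.
Qed.
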